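(* Let $r\ge 1$ and $n\ge 0$ be integers. Let $A(n,r)$ be the set of partitions of $n$ in which every part occurring with odd multiplicity has multiplicity at least $2r+1$, and let $C(n,r)$ be the set of partitions of $n$ in which every odd part is congruent to $2r+1 \pmod{4r+2}$. For a partition $\lambda=(\lambda_1^{m_1},\lambda_2^{m_2},\ldots)\in A(n,r)$ (multiplicity notation, distinct parts $\lambda_i$ with multiplicities $m_i\ge 1$), define $\beta_r(\lambda)=\bigcup_{i\ge1}\beta_r(\lambda_i^{m_i})$ (multiset union), where: If $\lambda_i$ is even: $\lambda_i^{m_i}\mapsto \lambda_i^{m_i-(2r+2v+2)},(2\lambda_i)^{r+v+1}$ if $m_i\equiv 2v+1 \pmod{2r+1}$ with $0\le v\le r-1$; and $\lambda_i^{m_i}\mapsto \lambda_i^{m_i-2v},(2\lambda_i)^{v}$ if $m_i\equiv 2v\pmod{2r+1}$ with $0\le v\le r$. If $\lambda_i$ is odd: $\lambda_i^{m_i}\mapsto ((2r+1)\lambda_i)^{\frac{m_i-(2r+2v+2)}{2r+1}},(2\lambda_i)^{r+v+1}$ if $m_i\equiv 2v+1\pmod{2r+1}$ with $0\le v\le r-1$; and $\lambda_i^{m_i}\mapsto ((2r+1)\lambda_i)^{\frac{m_i-2v}{2r+1}},(2\lambda_i)^{v}$ if $m_i\equiv 2v\pmod{2r+1}$ with $0\le v\le r$. Then $\beta_r$ is a well-defined bijection from $A(n,r)$ onto $C(n,r)$.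
   Context: A partition is written in multiplicity notation $(\lambda_1^{m_1},\lambda_2^{m_2},\ldots)$, meaning the part $\lambda_i$ appears $m_i$ times; a factor $x^0$ means the part $x$ does not appear. Partitions are regarded as multisets, and $\cup$ denotes multiset union. *)

From mathcomp Require Import all_boot.
Set Implicit Arguments. Unset Strict Implicit. Unset Printing Implicit Defensive.

(* A partition of n: a nonincreasing list of positive parts summing to n.
   Partitions are multisets; the sorted list is a canonical representative. *)
Definition is_partition (n : nat) (la : seq nat) : Prop :=
  [/\ sorted geq la, all (fun p => 0 < p) la & sumn la = n].

Definition inA (n r : nat) (la : seq nat) : Prop :=
  is_partition n la /\
  (forall p, p \in la -> odd (count_mem p la) -> r.*2.+1 <= count_mem p la).

Definition inC (n r : nat) (la : seq nat) : Prop :=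
  is_partition n la /\
  (forall p, p \in la -> odd p -> p %% (r.*2.+1).*2 = r.*2.+1).

(* For multiplicity m, with t = m mod (2r+1):
   if t = 2v+1 (0 <= v <= r-1): removed amount k = 2r+2v+2, doubled count r+v+1;
   if t = 2v   (0 <= v <= r)  : removed amount k = 2v,      doubled count v. *)
Definition beta_v (r m : nat) : nat := (m %% r.*2.+1)./2.
Definition beta_k (r m : nat) : nat :=
  if odd (m %% r.*2.+1) then 2 * r + 2 * beta_v r m + 2 else 2 * beta_v r m.
Definition beta_d (r m : nat) : nat :=
  if odd (m %% r.*2.+1) then r + beta_v r m + 1 else beta_v r m.

Definition beta_block (r p m : nat) : seq nat :=
  (if odd p then nseq ((m - beta_k r m) %/ r.*2.+1) (r.*2.+1 * p)
   else nseq (m - beta_k r m) p) ++ nseq (beta_d r m) (2 * p).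

(* well-definedness of a block: the multiplicities in the image are
   nonnegative integers (no truncated subtraction, exact division) *)
Definition block_welldef (r p m : nat) : Prop :=
  beta_k r m <= m /\ (odd p -> r.*2.+1 %| m - beta_k r m).

Definition beta (r : nat) (la : seq nat) : seq nat :=
  sort geq (flatten [seq beta_block r p (count_mem p la) | p <- undup la]).

(* If odd multiplicities are at least 2r+1, every multiplicity m of a part p
   is uniquely m = (2r+1) e + 2 d with d < 2r+1, and beta_r replaces p^m by
   p^((2r+1) e) (or ((2r+1) p)^e when p is odd) together with (2p)^d.  So the
   multiplicity of a part q in beta_r(la) is (2r+1) e_q + d_(q/2) for q even
   and e_(q/(2r+1)) for q odd, from which e_p and d_p, hence la, are read off
   by division with remainder by 2r+1; every multiplicity function vanishing
   on the odd parts not divisible by 2r+1, i.e. every partition in C(n,r),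
   arises in this way.  None of this uses r >= 1. *)

From mathcomp Require Import all_boot zify.
Set Implicit Arguments.
Unset Strict Implicit.
Unset Printing Implicit Defensive.

Local Notation mult la := (fun p => count_mem p la).

Lemma odd_divn q d : odd q -> d %| q -> odd (q %/ d).
Proof. by move=> + d_dvd; rewrite -{1}(divnK d_dvd) oddM => /andP[]. Qed.

Lemma odd_modn_double q d : odd q -> (q %% d.*2 == d) = (d %| q).
Proof.
move=> q_odd; apply/eqP/idP => [q_mod | d_dvd].
  by rewrite /dvdn -(modn_dvdm q (dvdn_mull 2 (dvdnn d))) mul2n q_mod modnn.
have q_eq := divnK d_dvd; have := odd_double_half (q %/ d).
rewrite odd_divn // => j_eq; have q_gt0 := odd_gt0 q_odd.
have -> : q = (q %/ d)./2 * d.*2 + d by nia.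
by rewrite modnMDl modn_small //; nia.
Qed.

Lemma mem_leq_sumn (x : nat) l : x \in l -> x <= sumn l.
Proof. by elim: l => //= y l IH; rewrite in_cons => /predU1P[->|/IH]; lia. Qed.

Lemma notin_iota1_mulnl k q n : 0 < k -> q \notin iota 1 n -> k * q \notin iota 1 n.
Proof. by rewrite !mem_iota; nia. Qed.

Lemma sort_geq_sorted (l : seq nat) : sorted geq (sort geq l).
Proof. by apply: sort_sorted => x y; apply: leq_total. Qed.

Lemma sorted_geq_count_eq (l1 l2 : seq nat) : sorted geq l1 -> sorted geq l2 ->
  (forall x, count_mem x l1 = count_mem x l2) -> l1 = l2.
Proof.
move=> l1_sorted l2_sorted count_eq; apply: sorted_eq l1_sorted l2_sorted _.
- by move=> y x z /= yx zy; apply: leq_trans zy yx.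
- by move=> x y; rewrite andbC => /anti_leq.
- by apply/allP => x _; apply/eqP.
Qed.

Lemma sum_count_nseq (T : eqType) (u : seq T) (h : T -> nat) (phi : T -> T) q :
  \sum_(p <- u) count_mem q (nseq (h p) (phi p)) = \sum_(p <- u | phi p == q) h p.
Proof.
rewrite [RHS]big_mkcond; apply: eq_bigr => p _.
by rewrite count_nseq /=; case: eqP; rewrite ?mul1n.
Qed.

Lemma sum_pred1_uniq (T : eqType) (u : seq T) (h : T -> nat) a :
  uniq u -> (a \notin u -> h a = 0) -> \sum_(p <- u | p == a) h p = h a.
Proof.
move=> u_uniq h_out; rewrite (eq_bigr (fun=> h a)) => [|p /eqP -> //].
rewrite big_const_seq iter_addn_0 (count_uniq_mem a u_uniq).
by case: (boolP (a \in u)) => [_|/h_out ->]; rewrite ?muln1 ?muln0.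
Qed.

Lemma count_flatten_nseq (T : eqType) (u : seq T) (h : T -> nat) q :
  uniq u -> (q \notin u -> h q = 0) ->
  count_mem q (flatten [seq nseq (h p) p | p <- u]) = h q.
Proof.
move=> u_uniq h_out; rewrite count_flatten sumnE !big_map sum_count_nseq.
exact: sum_pred1_uniq.
Qed.

Lemma partition_count_out n la q :
  is_partition n la -> q \notin iota 1 n -> count_mem q la = 0.
Proof.
move=> [_ la_pos la_sum] q_out; apply/count_memPn; apply: contra q_out => q_in.
have := mem_leq_sumn q_in; have := allP la_pos q q_in.
by rewrite mem_iota la_sum; lia.
Qed.

Definition parts_of_mult n (f : nat -> nat) :=
  sort geq (flatten [seq nseq (f p) p | p <- iota 1 n]).

Lemma count_parts_of_mult n f q : (forall q, q \notin iota 1 n -> f q = 0) ->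
  count_mem q (parts_of_mult n f) = f q.
Proof.
move=> f_out; rewrite (permP (permEl (perm_sort _ _))).
exact: count_flatten_nseq (iota_uniq 1 n) (f_out q).
Qed.

Lemma parts_of_mult_gt0 n f : all (fun p => 0 < p) (parts_of_mult n f).
Proof.
apply/allP => p; rewrite mem_sort => /flattenP[_ /mapP[x x_in ->]] /nseqP[-> _].
by move: x_in; rewrite mem_iota => /andP[].
Qed.

Section Beta.

Variable r : nat.
Local Notation s := r.*2.+1.

Lemma beta_kE m : beta_k r m = 2 * beta_d r m.
Proof. by rewrite /beta_k /beta_d; case: ifP => _; lia. Qed.

Lemma beta_d_lt m : beta_d r m < s.
Proof.
rewrite /beta_d /beta_v; have t_lt : m %% s < s by rewrite ltn_pmod.
by have := odd_double_half (m %% s); case: odd => /=; lia.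
Qed.

Lemma beta_d_decomp e d : d < s -> beta_d r (s * e + 2 * d) = d.
Proof.
move=> d_lt; rewrite /beta_d /beta_v mulnC -modnDml modnMl add0n.
have [d2_lt | d2_ge] := ltnP (2 * d) s.
  by rewrite modn_small // mul2n odd_double doubleK.
have -> : (2 * d) %% s = (d - r - 1).*2.+1.
  by rewrite -[2 * d](subnK d2_ge) modnDr modn_small; lia.
by rewrite /= odd_double /= uphalf_half odd_double doubleK; lia.
Qed.

Lemma beta_k_decomp e d : d < s -> beta_k r (s * e + 2 * d) = 2 * d.
Proof. by move=> d_lt; rewrite beta_kE beta_d_decomp. Qed.

Definition beta_e m := (m - beta_k r m) %/ s.

Lemma beta_e_decomp e d : d < s -> beta_e (s * e + 2 * d) = e.
Proof. by move=> d_lt; rewrite /beta_e beta_k_decomp // addnK mulKn. Qed.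

(* Euclidean division by s, except that an odd remainder t borrows one s
   so that s + t becomes an even remainder 2 d with d < s. *)
Lemma mult_decomp m :
  (odd m -> s <= m) -> exists e d, d < s /\ m = s * e + 2 * d.
Proof.
move=> large; have t_lt : m %% s < s by rewrite ltn_pmod.
have m_eq := divn_eq m s; have t_eq := odd_double_half (m %% s).
case t_odd: (odd (m %% s)) in t_eq.
  case: (m %/ s) m_eq => [|q] m_eq.
    by move: large; rewrite m_eq /= t_odd; lia.
  by exists q, (r + (m %% s)./2 + 1); split; lia.
by exists (m %/ s), (m %% s)./2; split; lia.
Qed.

Lemma beta_decomp m : (odd m -> s <= m) -> m = s * beta_e m + 2 * beta_d r m.
Proof.
by move=> /mult_decomp[e [d [d_lt ->]]]; rewrite beta_e_decomp ?beta_d_decomp.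
Qed.

Lemma beta_e0 : beta_e 0 = 0.
Proof. by rewrite /beta_e sub0n div0n. Qed.

Lemma beta_d0 : beta_d r 0 = 0.
Proof. by rewrite /beta_d /beta_v mod0n. Qed.

Lemma block_welldef_large p m : (odd m -> s <= m) -> block_welldef r p m.
Proof.
move=> /mult_decomp[e [d [d_lt ->]]]; rewrite /block_welldef beta_k_decomp //.
by rewrite addnK leq_addl; split=> // _; apply: dvdn_mulr.
Qed.

(* For odd p, beta_r glues the copies of p it keeps into parts (2r+1) p. *)
Definition merge_part p := if odd p then s * p else p.

Lemma merge_part_eq p q :
  (merge_part p == q) = if odd q then (s %| q) && (p == q %/ s) else p == q.
Proof.
have odd_sp : odd (s * p) = odd p by rewrite oddM /= odd_double.
rewrite /merge_part; case p_odd: (odd p); case q_odd: (odd q) => //.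
- apply/eqP/andP => [<- | [/divnK q_eq /eqP ->]]; last by rewrite mulnC q_eq.
  by rewrite dvdn_mulr // mulKn.
- have -> : (p == q) = false by apply/eqP => pq; rewrite pq q_odd in p_odd.
  by apply/eqP => spq; rewrite -spq odd_sp p_odd in q_odd.
- have -> : (p == q) = false by apply/eqP => pq; rewrite pq q_odd in p_odd.
  apply/esym/negbTE/negP => /andP[/divnK q_eq /eqP p_eq].
  by rewrite -q_eq -p_eq mulnC odd_sp p_odd in q_odd.
Qed.

Lemma double_eq p q : (2 * p == q) = ~~ odd q && (p == q./2).
Proof.
case: (boolP (odd q)) => q_odd /=.
  by apply/eqP => pq; rewrite -pq mul2n odd_double in q_odd.
by rewrite -[q in LHS](even_halfK q_odd) -mul2n eqn_pmul2l.
Qed.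

Lemma beta_block_decomp p e d : d < s ->
  beta_block r p (s * e + 2 * d)
  = nseq (if odd p then e else s * e) (merge_part p) ++ nseq d (2 * p).
Proof.
move=> d_lt; rewrite /beta_block /merge_part beta_k_decomp ?beta_d_decomp //.
by rewrite addnK mulKn //; case: odd.
Qed.

Lemma beta_blockE p m : (odd m -> s <= m) ->
  beta_block r p m = nseq (if odd p then beta_e m else s * beta_e m)
                          (merge_part p) ++ nseq (beta_d r m) (2 * p).
Proof.
move=> /mult_decomp[e [d [d_lt ->]]].
by rewrite beta_block_decomp ?beta_e_decomp ?beta_d_decomp.
Qed.

Lemma sumn_beta_block p m : (odd m -> s <= m) -> sumn (beta_block r p m) = m * p.
Proof.
move=> /mult_decomp[e [d [d_lt ->]]]; rewrite beta_block_decomp //.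
by rewrite sumn_cat !sumn_nseq /merge_part; case: odd; lia.
Qed.

Definition large_odd_mults (f : nat -> nat) := forall p, odd (f p) -> s <= f p.

Definition beta_mult (f : nat -> nat) q :=
  if odd q then (if s %| q then beta_e (f (q %/ s)) else 0)
  else s * beta_e (f q) + beta_d r (f q./2).

Lemma count_beta la q : large_odd_mults (mult la) ->
  count_mem q (beta r la) = beta_mult (mult la) q.
Proof.
move=> large; have mult_out a : a \notin undup la -> count_mem a la = 0.
  by rewrite mem_undup => /count_memPn.
rewrite /beta (permP (permEl (perm_sort _ _))) count_flatten sumnE !big_map.
under eq_bigr => p _ do rewrite /= (beta_blockE _ (large p)) count_cat.
rewrite big_split /= !sum_count_nseq (eq_bigl _ _ (merge_part_eq^~ q)).
rewrite (eq_bigl _ _ (double_eq^~ q)) /beta_mult.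
case: (boolP (odd q)) => q_odd /=; rewrite ?big_pred0_eq ?addn0.
  case: ifP => s_dvd_q /=; rewrite ?big_pred0_eq //.
  rewrite sum_pred1_uniq ?undup_uniq ?odd_divn // => /mult_out ->.
  by rewrite beta_e0.
rewrite !sum_pred1_uniq ?undup_uniq ?(negbTE q_odd) // => /mult_out ->.
  by rewrite beta_d0.
by rewrite beta_e0 muln0.
Qed.

Lemma eq_beta_mult f1 f2 : f1 =1 f2 -> beta_mult f1 =1 beta_mult f2.
Proof. by move=> f12 q; rewrite /beta_mult !f12. Qed.

Lemma sumn_beta la : large_odd_mults (mult la) -> sumn (beta r la) = sumn la.
Proof.
move=> large; rewrite /beta (perm_sumn (permEl (perm_sort _ _))).
rewrite -[in RHS](perm_sumn (perm_count_undup la)) !sumn_flatten -!map_comp.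
by congr sumn; apply: eq_map => p /=; rewrite (sumn_beta_block p (large p)) sumn_nseq mulnC.
Qed.

(* Reads the decomposition s e + 2 d of the multiplicity of p back from g:
   d off the part 2 p, and e off the part s p (p odd) or p (p even). *)
Definition beta_inv_mult (g : nat -> nat) p :=
  s * (if odd p then g (s * p) else g p %/ s) + 2 * (g (2 * p) %% s).

Lemma eq_beta_inv_mult g1 g2 : g1 =1 g2 -> beta_inv_mult g1 =1 beta_inv_mult g2.
Proof. by move=> g12 p; rewrite /beta_inv_mult !g12. Qed.

Lemma large_beta_inv_mult g : large_odd_mults (beta_inv_mult g).
Proof.
move=> p; rewrite /beta_inv_mult oddD oddM /= odd_double /= mul2n odd_double addbF.
by case: (if _ then _ else _) => [|e] //= _; rewrite mulnS; lia.
Qed.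

Lemma beta_multK f : large_odd_mults f -> beta_inv_mult (beta_mult f) =1 f.
Proof.
move=> large p; rewrite [RHS](beta_decomp (large p)) /beta_inv_mult.
have -> : beta_mult f (2 * p) %% s = beta_d r (f p).
  by rewrite /beta_mult mul2n odd_double doubleK mulnC modnMDl modn_small ?beta_d_lt.
congr (s * _ + _); rewrite /beta_mult; case: ifP => p_odd.
  by rewrite oddM /= odd_double p_odd dvdn_mulr // mulKn.
by rewrite p_odd mulnC divnMDl // divn_small ?beta_d_lt // addn0.
Qed.

Lemma beta_inv_multK g : (forall q, odd q -> ~~ (s %| q) -> g q = 0) ->
  beta_mult (beta_inv_mult g) =1 g.
Proof.
move=> g_out q.
have inv_e p : beta_e (beta_inv_mult g p) = if odd p then g (s * p) else g p %/ s.
  by rewrite beta_e_decomp ?ltn_pmod.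
have inv_d p : beta_d r (beta_inv_mult g p) = g (2 * p) %% s.
  by rewrite beta_d_decomp ?ltn_pmod.
rewrite /beta_mult !inv_e !inv_d; case: ifP => q_odd.
  case: ifP => s_dvd_q; last by rewrite g_out ?s_dvd_q.
  by rewrite odd_divn // mulnC divnK.
by rewrite mul2n even_halfK ?q_odd // mulnC -divn_eq.
Qed.

Lemma inA_large n la : inA n r la -> large_odd_mults (mult la).
Proof.
move=> [_ A_mult] p p_odd; have p_in : p \in la.
  by apply: contraTT p_odd => /count_memPn ->.
exact: A_mult.
Qed.

Lemma beta_welldef n la p : inA n r la -> block_welldef r p (count_mem p la).
Proof. by move=> /inA_large large; apply: block_welldef_large (large p). Qed.

Lemma beta_inC n la : inA n r la -> inC n r (beta r la).
Proof.
move=> la_A; have large := inA_large la_A; have [[_ la_pos la_sum] _] := la_A.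
have count0 : count_mem 0 la = 0.
  by apply/count_memPn/negP => /(allP la_pos).
split; first split.
- exact: sort_geq_sorted.
- apply/allP => q q_in; rewrite lt0n; apply: contraTneq q_in => ->.
  by apply/count_memPn; rewrite count_beta // /beta_mult /= count0 beta_e0 beta_d0 muln0.
- by rewrite sumn_beta.
- move=> q q_in q_odd; apply/eqP; rewrite odd_modn_double //.
  by move: q_in; rewrite -has_pred1 has_count count_beta // /beta_mult q_odd; case: ifP.
Qed.

Lemma beta_inj n la mu :
  inA n r la -> inA n r mu -> beta r la = beta r mu -> la = mu.
Proof.
move=> la_A mu_A beta_eq; have [[la_sorted _ _] _] := la_A.
have [[mu_sorted _ _] _] := mu_A.
apply: sorted_geq_count_eq => // p.
rewrite -(beta_multK (inA_large la_A)) -(beta_multK (inA_large mu_A)).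
apply: eq_beta_inv_mult => q.
by rewrite -(count_beta q (inA_large la_A)) -(count_beta q (inA_large mu_A)) beta_eq.
Qed.

Lemma beta_surj n mu : inC n r mu -> exists la, inA n r la /\ beta r la = mu.
Proof.
move=> [mu_part mu_C]; have [mu_sorted _ mu_sum] := mu_part.
have mu_out q : odd q -> ~~ (s %| q) -> count_mem q mu = 0.
  move=> q_odd s_ndvd_q; apply/count_memPn; apply: contra s_ndvd_q => q_in.
  by rewrite -odd_modn_double // mu_C.
set f := beta_inv_mult (mult mu).
have f_out q : q \notin iota 1 n -> f q = 0.
  move=> q_out; rewrite /f /beta_inv_mult /=.
  rewrite !(partition_count_out mu_part) ?notin_iota1_mulnl //.
  by rewrite div0n mod0n if_same !muln0.
set la := parts_of_mult n f; have la_count q := count_parts_of_mult q f_out.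
have la_large : large_odd_mults (mult la).
  by move=> p; rewrite la_count; apply: large_beta_inv_mult.
have beta_la : beta r la = mu.
  apply: sorted_geq_count_eq (sort_geq_sorted _) mu_sorted _ => q.
  by rewrite count_beta // (eq_beta_mult la_count) beta_inv_multK.
exists la; split=> //; split; first split.
- exact: sort_geq_sorted.
- exact: parts_of_mult_gt0.
- by rewrite -(sumn_beta la_large) beta_la.
- by move=> p _; apply: la_large.
Qed.

End Beta.

Theorem mainTheorem1 (n r : nat) (hr : 1 <= r) :
  (forall la, inA n r la -> forall p, p \in la -> block_welldef r p (count_mem p la)) /\
  (forall la, inA n r la -> inC n r (beta r la)) /\
  (forall la mu, inA n r la -> inA n r mu -> beta r la = beta r mu -> la = mu) /\
  (forall mu, inC n r mu -> exists la, inA n r la /\ beta r la = mu).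
Proof.
split; first by move=> la la_A p _; apply: beta_welldef la_A.
split; first exact: beta_inC.
split; first exact: beta_inj.
exact: beta_surj.
Qed.
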